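(* Let a group $G$ act isometrically on a proper geodesic metric space $X$ with basepoint $o$, let $F\subseteq G$ be a set of contracting elements, and let $C>0$ be such that $\mathrm{Ax}(f)$ is $C$-contracting for every $f\in F$. Let $M\ge C$, let $\gamma$ be a geodesic with both endpoints in $N_M(Go)$, and let $\alpha$ be a connected component of $\gamma\setminus N_M(Go)$. Then for any $\hat r>0$ there is a constant $L_2=L_2(\hat r,C)>0$ such that $\mathrm{diam}\big(\alpha\cap N_{\hat r}(h\,\mathrm{Ax}(f))\big)\le L_2$ for every $h\in G$ and $f\in F$.
   Context: $N_R(A)$ is the closed $R$-neighborhood. A closed $U$ is $C$-contracting if every geodesic $\gamma$ with $d(\gamma,U)\ge C$ has nearest-point projection $\pi_U(\gamma)$ of diameter $\le C$. An infinite-order $f$ is contracting if $n\mapsto f^no$ is a quasi-isometric embedding with contracting image. $E(f)=\{g\in G:\exists n>0,\ gf^ng^{-1}=f^{\pm n}\}$ and $\mathrm{Ax}(f)=E(f)\cdot o$ (so $\mathrm{Ax}(f)\subseteq Go$). *)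

From Stdlib Require Import Reals ZArith List.
Open Scope R_scope.

Set Implicit Arguments.

Section MetricNotions.
Variable X : Type.
Variable d : X -> X -> R.

Definition is_metric : Prop :=
  (forall x y, d x y = 0 <-> x = y) /\
  (forall x y, d x y = d y x) /\
  (forall x y z, d x z <= d x y + d y z).

Definition is_open (U : X -> Prop) : Prop :=
  forall x, U x -> exists eps, 0 < eps /\ forall y, d x y < eps -> U y.

Definition is_closed (A : X -> Prop) : Prop :=
  is_open (fun x => ~ A x).

Definition is_compact (K : X -> Prop) : Prop :=
  forall (I : Type) (U : I -> X -> Prop),
    (forall i, is_open (U i)) ->
    (forall x, K x -> exists i, U i x) ->
    exists l : list I, forall x, K x -> exists i, In i l /\ U i x.

Definition is_proper : Prop :=
  forall x r, is_compact (fun y => d x y <= r).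

Definition is_interval (I : R -> Prop) : Prop :=
  forall s t u, I s -> I u -> s <= t <= u -> I t.

Definition geodesic_on (I : R -> Prop) (gam : R -> X) : Prop :=
  is_interval I /\ forall s t, I s -> I t -> d (gam s) (gam t) = Rabs (s - t).

Definition seg (a b : R) : R -> Prop := fun t => a <= t <= b.

Definition is_geodesic_space : Prop :=
  forall x y, exists a b (gam : R -> X),
    a <= b /\ geodesic_on (seg a b) gam /\ gam a = x /\ gam b = y.

(* closed R-neighbourhood: d(x, A) = inf_{a in A} d(x,a) <= R *)
Definition nbhd (Rad : R) (A : X -> Prop) : X -> Prop :=
  fun x => forall eps, 0 < eps -> exists a, A a /\ d x a < Rad + eps.

Definition proj (U : X -> Prop) (x : X) : X -> Prop :=
  fun u => U u /\ forall u', U u' -> d x u <= d x u'.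

Definition diam_le (A : X -> Prop) (L : R) : Prop :=
  forall x y, A x -> A y -> d x y <= L.

Definition contracting (C : R) (U : X -> Prop) : Prop :=
  is_closed U /\
  forall (I : R -> Prop) (gam : R -> X),
    geodesic_on I gam ->
    (forall t u, I t -> U u -> C <= d (gam t) u) ->
    diam_le (fun p => exists t x, I t /\ x = gam t /\ proj U x p) C.

End MetricNotions.

Section GroupNotions.
Variable G : Type.
Variables (mul : G -> G -> G) (one : G) (inv : G -> G).

Definition is_group : Prop :=
  (forall a b c, mul a (mul b c) = mul (mul a b) c) /\
  (forall a, mul one a = a /\ mul a one = a) /\
  (forall a, mul (inv a) a = one /\ mul a (inv a) = one).

Fixpoint npow (g : G) (n : nat) : G :=
  match n with O => one | S k => mul g (npow g k) end.

Definition zpow (g : G) (z : Z) : G :=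
  match z with
  | Z0 => one
  | Zpos p => npow g (Pos.to_nat p)
  | Zneg p => inv (npow g (Pos.to_nat p))
  end.

Variable X : Type.
Variable d : X -> X -> R.
Variable act : G -> X -> X.

Definition isometric_action : Prop :=
  (forall x, act one x = x) /\
  (forall g h x, act (mul g h) x = act g (act h x)) /\
  (forall g x y, d (act g x) (act g y) = d x y).

Variable o : X.

Definition orbit : X -> Prop := fun x => exists g, x = act g o.

Definition contracting_element (f : G) : Prop :=
  (forall n : nat, (0 < n)%nat -> npow f n <> one) /\
  (exists lam c, 1 <= lam /\ 0 <= c /\
     forall m n : Z,
       Rabs (IZR (m - n)) / lam - c <= d (act (zpow f m) o) (act (zpow f n) o) /\
       d (act (zpow f m) o) (act (zpow f n) o) <= lam * Rabs (IZR (m - n)) + c) /\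
  (exists C', contracting d C' (fun x => exists n : Z, x = act (zpow f n) o)).

Definition elem_E (f g : G) : Prop :=
  exists n : nat, (0 < n)%nat /\
    (mul (mul g (npow f n)) (inv g) = npow f n \/
     mul (mul g (npow f n)) (inv g) = inv (npow f n)).

Definition Ax (f : G) : X -> Prop := fun x => exists g, elem_E f g /\ x = act g o.

Definition translate (h : G) (A : X -> Prop) : X -> Prop :=
  fun x => exists y, A y /\ x = act h y.

End GroupNotions.

Definition interval_component (S J : R -> Prop) : Prop :=
  (exists t, J t) /\ is_interval J /\ (forall t, J t -> S t) /\
  (forall J', is_interval J' -> (forall t, J t -> J' t) -> (forall t, J' t -> S t) ->
     forall t, J' t -> J t).

From Stdlib Require Import Reals ZArith List.
From Stdlib Require Import Lra Lia Classical.
Open Scope R_scope.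

Set Implicit Arguments.
Unset Strict Implicit.

(* Translating by h^-1 moves the geodesic piece onto one that stays at distance
   at least M >= C from Ax(f), because Ax(f) lies in the orbit Go.  By
   C-contraction the nearest-point projections of any two of its points that are
   rhat-close to Ax(f) are C-close, so the triangle inequality bounds their
   distance by L2 = 2 rhat + C, independently of M, h and f. *)

Section Metric.

Variable X : Type.
Variable d : X -> X -> R.
Hypothesis d_metric : is_metric d.

Lemma dist_sym x y : d x y = d y x.
Proof. exact (proj1 (proj2 d_metric) x y). Qed.

Lemma dist_triangle x y z : d x z <= d x y + d y z.
Proof. exact (proj2 (proj2 d_metric) x y z). Qed.

Lemma dist_nonneg x y : 0 <= d x y.
Proof.
  assert (d x x = 0) by (apply (proj1 d_metric); reflexivity).
  pose proof (dist_triangle x y x). rewrite (dist_sym y x) in *. lra.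
Qed.

Lemma not_nbhd_dist_ge M A x a : ~ nbhd d M A x -> A a -> M <= d x a.
Proof.
  intros Hx Ha. destruct (Rle_dec M (d x a)) as [|Hlt]; auto.
  exfalso; apply Hx. intros eps Heps. exists a. split; [exact Ha | lra].
Qed.

Lemma proj_dist_le_nbhd r U x p : nbhd d r U x -> proj d U x p -> d x p <= r.
Proof.
  intros Hx [_ Hmin]. destruct (Rle_dec (d x p) r) as [|Hgt]; auto.
  destruct (Hx (d x p - r)) as [u [Hu Hxu]]; [lra|].
  specialize (Hmin u Hu). lra.
Qed.

Lemma is_open_dist_gt z c : is_open d (fun y => c < d z y).
Proof.
  intros x Hx. exists (d z x - c). split; [lra|].
  intros y Hy. pose proof (dist_triangle z y x). rewrite (dist_sym y x) in *. lra.
Qed.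

Lemma dist_inf_exists (U : X -> Prop) z u0 : U u0 ->
  exists D, (forall u, U u -> D <= d z u) /\
            (forall e, 0 < e -> exists u, U u /\ d z u < D + e).
Proof.
  intros Hu0.
  set (E := fun r => exists u, U u /\ r = - d z u).
  destruct (completeness E) as [m [Hub Hlub]].
  - exists 0. intros r [u [_ ->]]. pose proof (dist_nonneg z u). lra.
  - exists (- d z u0). exists u0. auto.
  - exists (- m). split.
    + intros u Hu. assert (- d z u <= m) by (apply Hub; exists u; auto). lra.
    + intros e He. apply NNPP. intros Hno.
      enough (m <= m - e) by lra. apply Hlub.
      intros r [u [Hu ->]]. apply Rnot_lt_le. intros Hlt.
      apply Hno. exists u. split; [exact Hu | lra].
Qed.

(* If the infimum D of d(z, U) were not attained, the sets {d(z,.) > D + 1/n}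
   together with the complement of U would cover the compact ball of radius
   D + 1 about z; a finite subcover contradicts points of U arbitrarily close
   to distance D. *)
Lemma proj_exists (U : X -> Prop) z u0 :
  is_proper d -> is_closed d U -> U u0 -> exists p, proj d U z p.
Proof.
  intros Hproper Hclosed Hu0.
  destruct (dist_inf_exists z Hu0) as [D [HD Happrox]].
  apply NNPP. intros Hno.
  assert (Hgt : forall u, U u -> D < d z u).
  { intros u Hu. destruct (HD u Hu) as [|Heq]; auto. exfalso. apply Hno.
    exists u. split; [exact Hu|]. intros u' Hu'. rewrite <- Heq. auto. }
  set (V := fun n : nat => match n with
                           | O => fun y => ~ U y
                           | S k => fun y => D + / INR (S k) < d z y
                           end).
  destruct (Hproper z (D + 1) nat V) as [l Hl].
  { intros [|n]; [exact Hclosed | apply is_open_dist_gt]. }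
  { intros y _. destruct (classic (U y)) as [Hy|Hy]; [|exists O; exact Hy].
    assert (Hpos : 0 < d z y - D) by (specialize (Hgt y Hy); lra).
    destruct (archimed_cor1 _ Hpos) as [[|n] [Hn Hn0]]; [lia|].
    exists (S n). change (D + / INR (S n) < d z y). lra. }
  set (N := list_max l).
  assert (HN : 0 < / INR (S N)) by (apply Rinv_0_lt_compat, lt_0_INR; lia).
  destruct (Happrox (Rmin 1 (/ INR (S N)))) as [u [Hu Hdu]]; [apply Rmin_glb_lt; lra|].
  pose proof (Rmin_l 1 (/ INR (S N))). pose proof (Rmin_r 1 (/ INR (S N))).
  destruct (Hl u) as [[|n] [Hin Hv]]; [lra | exact (Hv Hu) |].
  change (D + / INR (S n) < d z u) in Hv.
  assert (Hn : (S n <= N)%nat).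
  { apply (proj1 (Forall_forall _ l) (proj1 (list_max_le l N) (le_n N))). exact Hin. }
  assert (/ INR (S N) <= / INR (S n)).
  { apply Rinv_le_contravar; [apply lt_0_INR; lia | apply le_INR; lia]. }
  lra.
Qed.

Lemma geodesic_on_sub (I J : R -> Prop) gam :
  is_interval J -> (forall t, J t -> I t) -> geodesic_on d I gam -> geodesic_on d J gam.
Proof. intros HJ HJI [_ Hiso]. split; [exact HJ|]. intros s t Hs Ht. auto. Qed.

Lemma contracting_geodesic_nbhd_diam C r U (I : R -> Prop) gam :
  is_proper d -> contracting d C U -> geodesic_on d I gam ->
  (forall t u, I t -> U u -> C <= d (gam t) u) ->
  diam_le d (fun x => (exists t, I t /\ x = gam t) /\ nbhd d r U x) (2 * r + C).
Proof.
  intros Hproper [Hclosed Hcontr] Hgeo Hfar x y [[s [Is ->]] Hs] [[t [It ->]] Ht].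
  destruct (Hs 1 Rlt_0_1) as [u0 [Hu0 _]].
  destruct (proj_exists (gam s) Hproper Hclosed Hu0) as [p Hp].
  destruct (proj_exists (gam t) Hproper Hclosed Hu0) as [q Hq].
  assert (Hpq : d p q <= C).
  { apply (Hcontr I gam Hgeo Hfar); [exists s, (gam s) | exists t, (gam t)]; auto. }
  pose proof (proj_dist_le_nbhd Hs Hp). pose proof (proj_dist_le_nbhd Ht Hq).
  pose proof (dist_triangle (gam s) p (gam t)). pose proof (dist_triangle p q (gam t)).
  rewrite (dist_sym q (gam t)) in *. lra.
Qed.

End Metric.

Section Action.

Variables (G : Type) (mul : G -> G -> G) (one : G) (inv : G -> G).
Variables (X : Type) (d : X -> X -> R) (act : G -> X -> X) (o : X).
Hypothesis G_group : is_group mul one inv.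
Hypothesis act_isometric : isometric_action mul one d act.

Lemma act_dist g x y : d (act g x) (act g y) = d x y.
Proof. exact (proj2 (proj2 act_isometric) g x y). Qed.

Lemma act_inv_r h x : act h (act (inv h) x) = x.
Proof.
  destruct act_isometric as [Hone [Hmul _]].
  rewrite <- Hmul, (proj2 (proj2 (proj2 G_group) h)). apply Hone.
Qed.

Lemma dist_act_inv h x y : d (act (inv h) x) y = d x (act h y).
Proof. rewrite <- (act_dist h), act_inv_r. reflexivity. Qed.

Lemma geodesic_on_act (I : R -> Prop) gam g :
  geodesic_on d I gam -> geodesic_on d I (fun t => act g (gam t)).
Proof. intros [HI Hiso]. split; [exact HI|]. intros s t Hs Ht. rewrite act_dist. auto. Qed.

Lemma nbhd_translate r h U x :
  nbhd d r (translate act h U) x -> nbhd d r U (act (inv h) x).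
Proof.
  intros Hx eps Heps. destruct (Hx eps Heps) as [w [[u [Hu ->]] Hw]].
  exists u. split; [exact Hu|]. rewrite dist_act_inv. exact Hw.
Qed.

Lemma translate_orbit h (U : X -> Prop) u :
  (forall v, U v -> orbit act o v) -> U u -> orbit act o (act h u).
Proof.
  intros HUo Hu. destruct (HUo u Hu) as [g ->].
  exists (mul h g). symmetry. apply (proj1 (proj2 act_isometric)).
Qed.

Lemma far_geodesic_translate_nbhd_diam C M r h U (I : R -> Prop) gam :
  is_metric d -> is_proper d -> contracting d C U ->
  (forall u, U u -> orbit act o u) -> C <= M -> geodesic_on d I gam ->
  (forall t, I t -> ~ nbhd d M (orbit act o) (gam t)) ->
  diam_le d (fun x => (exists t, I t /\ x = gam t) /\ nbhd d r (translate act h U) x)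
    (2 * r + C).
Proof.
  intros Hm Hproper HU HUo HCM Hgeo Hfar x y [[s [Is ->]] Hs] [[t [It ->]] Ht].
  rewrite <- (act_dist (inv h)).
  apply (contracting_geodesic_nbhd_diam Hm Hproper HU (geodesic_on_act (inv h) Hgeo)).
  - intros t' u It' Hu. rewrite dist_act_inv.
    pose proof (not_nbhd_dist_ge (Hfar t' It') (translate_orbit h HUo Hu)). lra.
  - split; [exists s; auto | apply nbhd_translate; exact Hs].
  - split; [exists t; auto | apply nbhd_translate; exact Ht].
Qed.

End Action.

Theorem lemma4p4 :
  forall (C rhat : R), 0 < C -> 0 < rhat ->
  exists L2 : R, 0 < L2 /\
  forall (X : Type) (d : X -> X -> R)
         (G : Type) (mul : G -> G -> G) (one : G) (inv : G -> G)
         (act : G -> X -> X) (o : X) (F : G -> Prop)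
         (M a b : R) (gam : R -> X) (J : R -> Prop),
    is_metric d -> is_proper d -> is_geodesic_space d ->
    is_group mul one inv ->
    isometric_action mul one d act ->
    (forall f, F f -> contracting_element mul one inv d act o f) ->
    (forall f, F f -> contracting d C (Ax mul one inv act o f)) ->
    C <= M ->
    a <= b -> geodesic_on d (seg a b) gam ->
    nbhd d M (orbit act o) (gam a) -> nbhd d M (orbit act o) (gam b) ->
    interval_component (fun t => seg a b t /\ ~ nbhd d M (orbit act o) (gam t)) J ->
    forall (h f : G), F f ->
      diam_le d
        (fun x => (exists t, J t /\ x = gam t) /\
                  nbhd d rhat (translate act h (Ax mul one inv act o f)) x)
        L2.
Proof.
  intros C rhat HC Hrhat. exists (2 * rhat + C). split; [lra|].
  intros X d G mul one inv act o F M a b gam J Hm Hproper _ Hgroup Hact _ HFC HCM _ Hgeo _ _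
    [_ [HJ HJS]] h f Hf.
  assert (Ax_orbit : forall u, Ax mul one inv act o f u -> orbit act o u).
  { intros u [g [_ ->]]. exists g. reflexivity. }
  apply (far_geodesic_translate_nbhd_diam Hgroup Hact Hm Hproper (HFC f Hf) Ax_orbit HCM).
  - exact (geodesic_on_sub HJ (fun t Jt => proj1 (proj1 HJS t Jt)) Hgeo).
  - intros t Jt. exact (proj2 (proj1 HJS t Jt)).
Qed.
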